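(* Let $\mathcal{Y}=\{y_1,\dots,y_{n+1}\}\subset\mathbb{R}^n$ be affinely independent and $y_0\in\mathbb{R}^n$, with notation as in the context. Then the $(|\mathcal{I}_-|-1)\times(|\mathcal{I}_-|-1)$ matrix $Y_-P_-$ is invertible (when $|\mathcal{I}_-|=1$ this is the empty matrix, regarded as invertible).
   Context: The barycentric coordinates of $y_0$ w.r.t. $\mathcal{Y}$ are the unique reals $\ell_1,\dots,\ell_{n+1}$ with $\sum_{i=1}^{n+1}\ell_i=1$, $\sum_{i=1}^{n+1}\ell_iy_i=y_0$; set $\ell_0=-1$. The points are ordered so that $\ell_1\ge\ell_2\ge\cdots\ge\ell_{n+1}$. Let $\mathcal{I}_+=\{i\in\{0,\dots,n+1\}:\ell_i>0\}=\{1,\dots,|\mathcal{I}_+|\}$ and $\mathcal{I}_-=\{i\in\{0,\dots,n+1\}:\ell_i<0\}=\{0\}\cup\{n+3-|\mathcal{I}_-|,\dots,n+1\}$. Let $G=\sum_{i=0}^{n+1}\ell_iy_iy_i^T$. Let $Y\in\mathbb{R}^{(n+1)\times n}$ have $i$th row $(y_i-y_0)^T$; then $G=Y^T\operatorname{diag}(\ell_1,\dots,\ell_{n+1})Y$. Let $Y_-$ be the submatrix of $Y$ formed by its last $|\mathcal{I}_-|-1$ rows (those indexed by $\mathcal{I}_-\setminus\{0\}$). Let $P_-\in\mathbb{R}^{n\times(|\mathcal{I}_-|-1)}$ be a matrix whose columns are orthonormal eigenvectors of $G$ for its negative eigenvalues (there are $|\mathcal{I}_-|-1$ of them, counted with multiplicity).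 *)

From HB Require Import structures.
From mathcomp Require Import all_boot all_order all_algebra.
From mathcomp Require Export reals.
From mathcomp Require Export all_boot all_order all_algebra.
Set Implicit Arguments. Unset Strict Implicit. Unset Printing Implicit Defensive.
Import Order.TTheory GRing.Theory Num.Theory.
Local Open Scope ring_scope.

(* Affine independence of y_0..y_(m-1): the rows (1, y_i) are linearly
   independent, i.e. sum c_i y_i = 0 /\ sum c_i = 0 -> c = 0. *)
Definition affine_independent (R : fieldType) (m n : nat) (y : 'I_m -> 'rV[R]_n) :=
  row_free (\matrix_(i < m) row_mx (1 : 'rV[R]_1) (y i)).

Definition barycentric (R : fieldType) (m n : nat) (y : 'I_m -> 'rV[R]_n)
  (y0 : 'rV[R]_n) (l : 'I_m -> R) :=
  \sum_(i < m) l i = 1 /\ \sum_(i < m) l i *: y i = y0.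

(* G = sum_{i=0}^{n+1} l_i y_i y_i^T with l_0 = -1 (outer products,
   written for row vectors as y^T *m y). *)
Definition Gmat (R : fieldType) (m n : nat) (y : 'I_m -> 'rV[R]_n)
  (y0 : 'rV[R]_n) (l : 'I_m -> R) : 'M[R]_n :=
  \sum_(i < m) l i *: ((y i)^T *m y i) - (y0^T *m y0).

(* Y : rows (y_i - y_0)^T, i = 1..n+1 (here indexed 0..n). *)
Definition Ymat (R : fieldType) (m n : nat) (y : 'I_m -> 'rV[R]_n)
  (y0 : 'rV[R]_n) : 'M[R]_(m, n) :=
  \matrix_(i < m) (y i - y0).

(* Y_- : the last k rows of Y. *)
Definition Yminus (R : fieldType) (m n k : nat) (y : 'I_m.+1 -> 'rV[R]_n)
  (y0 : 'rV[R]_n) : 'M[R]_(k, n) :=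
  rowsub (fun i : 'I_k => (inord (m.+1 - k + i) : 'I_m.+1)) (Ymat y y0).
Arguments Yminus {R m n} k y y0.

From mathcomp Require Import ring zify.
Set Implicit Arguments.
Unset Strict Implicit.
Unset Printing Implicit Defensive.
Import Order.TTheory GRing.Theory Num.Theory.
Local Open Scope ring_scope.

(* If Y_- P u = 0, put w := P u. On one hand w^T G w = u^T diag(lambda) u
   with all lambda < 0, so w^T G w <= 0 with equality only for u = 0. On the
   other hand, the barycentric identities give
   w^T G w = sum_i l_i ((y_i - y_0) . w)^2, where every term with l_i < 0
   vanishes because y_i - y_0 is then a row of Y_-; hence w^T G w >= 0 and
   u = 0. *)

Definition qform {R : pzRingType} {n : nat} (A : 'M[R]_n) (w : 'rV[R]_n) : R :=
  (w *m A *m w^T) 0 0.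

Section QuadraticForm.
Variable R : comPzRingType.

Lemma qform_outer (n : nat) (a w : 'rV[R]_n) :
  qform (a^T *m a) w = ((a *m w^T) 0 0) ^+ 2.
Proof.
rewrite /qform !mulmxA -[w *m a^T]trmxK trmx_mul trmxK -mulmxA.
by rewrite [LHS]mxE big_ord1 mxE expr2.
Qed.

Lemma qform_eigenbasis (n k : nat) (G : 'M[R]_n) (P : 'M[R]_(n, k))
    (L u : 'rV[R]_k) :
  P^T *m P = 1%:M -> G *m P = P *m diag_mx L ->
  qform G (u *m P^T) = \sum_j L 0 j * u 0 j ^+ 2.
Proof.
move=> orthoP GP; rewrite /qform trmx_mul trmxK -!mulmxA (mulmxA G) GP.
rewrite !mulmxA -(mulmxA u) orthoP mulmx1 mul_mx_diag mxE.
by apply: eq_bigr => j _; rewrite !mxE; ring.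
Qed.

End QuadraticForm.

Section GramForm.
Variable R : fieldType.

Lemma qform_Gmat (m n : nat) (y : 'I_m -> 'rV[R]_n) (y0 : 'rV[R]_n)
    (l : 'I_m -> R) (w : 'rV[R]_n) :
  qform (Gmat y y0 l) w =
  \sum_i l i * ((y i *m w^T) 0 0) ^+ 2 - ((y0 *m w^T) 0 0) ^+ 2.
Proof.
rewrite /qform /Gmat mulmxBr mulmxBl mulmx_sumr mulmx_suml mxE summxE.
rewrite [X in _ + X]mxE -/(qform _ _) qform_outer; congr (_ - _).
by apply: eq_bigr => i _; rewrite -scalemxAr -scalemxAl [LHS]mxE -/(qform _ _) qform_outer.
Qed.

Lemma qform_Gmat_barycentric (m n : nat) (y : 'I_m -> 'rV[R]_n) (y0 : 'rV[R]_n)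
    (l : 'I_m -> R) (w : 'rV[R]_n) :
  barycentric y y0 l ->
  qform (Gmat y y0 l) w = \sum_i l i * (((y i - y0) *m w^T) 0 0) ^+ 2.
Proof.
move=> [sum_l sum_ly]; rewrite qform_Gmat.
have sum_la : \sum_i l i * (y i *m w^T) 0 0 = (y0 *m w^T) 0 0.
  rewrite -sum_ly mulmx_suml summxE; apply: eq_bigr => i _.
  by rewrite -scalemxAl [RHS]mxE.
have sqrB (c x d : R) : c * (x - d) ^+ 2 = c * x ^+ 2 - d *+ 2 * (c * x) + d ^+ 2 * c.
  by ring.
apply: esym; under eq_bigr do rewrite mulmxBl mxE [X in _ + X]mxE sqrB.
rewrite big_split sumrB /= -!mulr_sumr sum_la sum_l.
by move: (_ *m _) => b; ring.
Qed.

End GramForm.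

Lemma eigencols_neg_diag (R : numFieldType) (n k : nat) (G : 'M[R]_n)
    (P : 'M[R]_(n, k)) :
  (forall j : 'I_k, exists2 lam : R, lam < 0 & G *m col j P = lam *: col j P) ->
  exists2 L : 'rV[R]_k, (forall j, L 0 j < 0) & G *m P = P *m diag_mx L.
Proof.
move=> eig.
have /fin_all_exists[L HL] : forall j : 'I_k, exists lam : R,
    lam < 0 /\ G *m col j P = lam *: col j P.
  by move=> j; have [lam lam_neg eq_lam] := eig j; exists lam.
exists (\row_j L j) => [j | ]; first by rewrite mxE; case: (HL j).
apply/matrixP => i j; rewrite mul_mx_diag !mxE mulrC.
have /matrixP/(_ i 0) := proj2 (HL j); rewrite !mxE => <-.
by apply: eq_bigr => c _; rewrite !mxE.
Qed.

Lemma neg_weighted_sqr_ge0 (R : realDomainType) (k : nat) (L u : 'rV[R]_k) :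
  (forall j, L 0 j < 0) -> 0 <= \sum_j L 0 j * u 0 j ^+ 2 -> u = 0.
Proof.
move=> L_neg sum_ge0.
have term_ge0 j : 0 <= - (L 0 j * u 0 j ^+ 2).
  by rewrite oppr_ge0 mulr_le0_ge0 ?sqr_ge0 ?ltW.
have sum_eq0 : \sum_j - (L 0 j * u 0 j ^+ 2) = 0.
  by apply/eqP; rewrite eq_le sumr_ge0 // andbT sumrN oppr_le0.
apply/rowP => j; have /eqP := @psumr_eq0P _ _ xpredT _ (fun j _ => term_ge0 j) sum_eq0 j isT.
by rewrite oppr_eq0 mulf_eq0 lt_eqF //= expf_eq0 /= mxE => /eqP.
Qed.

Lemma card_ord_geq (m : nat) (i : 'I_m) :
  #|[set j : 'I_m | (i <= j)%N]| = (m - i)%N.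
Proof.
rewrite -sum1_card (eq_bigl (fun j : 'I_m => true && (i <= j)%N)) => [|j]; last by rewrite inE.
by rewrite -(@big_geq_mkord _ _ _ i m xpredT (fun=> 1%N)) sum_nat_const_nat muln1.
Qed.

Lemma nonincreasing_neg_tail (R : numDomainType) (m : nat) (l : 'I_m -> R) :
  (forall i j : 'I_m, (i <= j)%N -> l j <= l i) ->
  forall i : 'I_m, l i < 0 -> (m - #|[set j | (l j < 0)%R]| <= i)%N.
Proof.
move=> l_noninc i li_neg.
have : [set j : 'I_m | (i <= j)%N] \subset [set j | l j < 0].
  by apply/subsetP => j; rewrite !inE => /l_noninc/le_lt_trans; apply.
move/subset_leq_card; rewrite card_ord_geq.
by have := ltn_ord i; move: #|_| (nat_of_ord i) => c i'; lia.
Qed.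

Lemma Yminus_tail_row (R : fieldType) (m n k : nat) (y : 'I_m.+1 -> 'rV[R]_n)
    (y0 : 'rV[R]_n) (i : 'I_m.+1) :
  (m.+1 - k <= i)%N -> exists j : 'I_k, row j (Yminus k y y0) = y i - y0.
Proof.
move=> i_tail; have j_lt : (i - (m.+1 - k) < k)%N by have := ltn_ord i; lia.
exists (Ordinal j_lt); rewrite row_rowsub rowK; congr (y _ - y0).
by apply: val_inj; rewrite /= inordK; have := ltn_ord i; lia.
Qed.

Lemma qform_Gmat_ge0_on_ker (R : realFieldType) (m n k : nat)
    (y : 'I_m.+1 -> 'rV[R]_n) (y0 : 'rV[R]_n) (l : 'I_m.+1 -> R) (w : 'rV[R]_n) :
  barycentric y y0 l ->
  (forall i, l i < 0 -> (m.+1 - k <= i)%N) ->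
  Yminus k y y0 *m w^T = 0 ->
  0 <= qform (Gmat y y0 l) w.
Proof.
move=> bary neg_tail ker_w; rewrite qform_Gmat_barycentric //.
apply: sumr_ge0 => i _; have [li_neg | li_ge0] := ltP (l i) 0; last first.
  by rewrite mulr_ge0 ?sqr_ge0.
have [j row_j] := Yminus_tail_row y y0 (neg_tail i li_neg).
by rewrite -row_j -row_mul ker_w row0 mxE expr0n mulr0.
Qed.

Theorem lemma4p2 (R : realType) (n : nat) (y : 'I_n.+1 -> 'rV[R]_n)
  (y0 : 'rV[R]_n) (l : 'I_n.+1 -> R) (k : nat) (P : 'M[R]_(n, k)) :
  affine_independent y ->
  barycentric y y0 l ->
  (forall i j : 'I_n.+1, (i <= j)%N -> l j <= l i) ->
  k = #|[set i : 'I_n.+1 | l i < 0]| ->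
  P^T *m P = 1%:M ->
  (forall j : 'I_k, exists2 lam : R, lam < 0 &
      Gmat y y0 l *m col j P = lam *: col j P) ->
  Yminus k y y0 *m P \in unitmx.
Proof.
move=> _ bary l_noninc k_neg orthoP eig.
have [L L_neg GP] := eigencols_neg_diag eig.
rewrite -unitmx_tr -row_free_unit; apply: inj_row_free => u.
rewrite trmx_mul mulmxA => /(congr1 trmx); rewrite trmx0 trmx_mul trmxK => ker_w.
apply: (neg_weighted_sqr_ge0 L_neg); rewrite -(qform_eigenbasis u orthoP GP).
apply: qform_Gmat_ge0_on_ker bary _ ker_w; rewrite k_neg.
exact: nonincreasing_neg_tail l_noninc.
Qed.
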